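(* Let $d\ge404$ and $k$ an integer with $d/2+1<k\le2d/3$. Then for every $x\in(1,2]$ such that $f(x)\le k/(2k-d)^2$, $$\frac{(x+1)f'(x)}{k}<\big(1+\eta(x)\big)f(x).$$
   Context: $f(x)=\binom dk^{-1}\sum_{i=0}^{d-k}\binom ki\binom{d-k}{i}x^{k-i}$ and $\eta(x)=\dfrac{2k-d}{d-k+\sqrt{(d-k)^2+d(2k-d)f(x)}}$. *)

From Stdlib Require Import Reals.
From Coquelicot Require Import Coquelicot.
Open Scope R_scope.

Definition fpoly (d k : nat) (x : R) : R :=
  / Binomial.C d k *
  sum_f_R0 (fun i => Binomial.C k i * Binomial.C (d - k) i * x ^ (k - i)) (d - k).

Definition eta (d k : nat) (x : R) : R :=
  (2 * INR k - INR d) /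
  ((INR d - INR k) +
   sqrt ((INR d - INR k) ^ 2 + INR d * (2 * INR k - INR d) * fpoly d k x)).

(* Write x = 1 + t with t > 0. By the revision identity for binomial
   coefficients and Vandermonde's convolution, f(1+t) = sum_n b_n t^n with
   b_n = C(k,n) C(d-n,d-k) / C(d,k) >= 0, b_0 = 1, satisfying the hypergeometric
   recurrence (n+1) b_(n+1) (d-n) = b_n (k-n)^2. In particular f(1+t) >= 1.
   1. Bounding the square root shows eta >= L := (2(2k-d)-1)/(2d) + 1/(2df); this
      is where f <= k/(2k-d)^2 is used.
   2. With kc := k (1 + (2(2k-d)-1)/(2d)), the claim then follows from
      (2+t) f'(1+t) < kc f(1+t) + k/(2d). The difference of the two sides is a
      polynomial in t whose constant term vanishes and whose n-th coefficient,
      by the recurrence, has the sign of a concave quadratic q(n) that is positive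
      at n = 1 and n = k; so it is positive for t > 0.
   The argument only needs k < d and 2k - d >= 1 (and t > 0). *)

From Stdlib Require Import Reals Lra Lia Psatz.
From Coquelicot Require Import Coquelicot.
From mathcomp Require ssreflect ssrfun ssrbool eqtype ssrnat fintype bigop binomial.
Open Scope R_scope.

(* Real-valued binomial coefficient; unlike Stdlib's [Binomial.C] it vanishes for j > n. *)
Definition binR (n j : nat) : R := INR (binomial.binomial n j).

Module BinomialFacts.
Import ssreflect ssrfun ssrbool eqtype ssrnat fintype bigop binomial.

Lemma binR_small n j : (n < j)%coq_nat -> binR n j = 0.
Proof. by move=> /ltP h; rewrite /binR bin_small. Qed.

Lemma binR_pos n j : (j <= n)%coq_nat -> 0 < binR n j.
Proof. by move=> /leP h; apply/lt_0_INR/ltP; rewrite bin_gt0. Qed.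

Lemma binR_n0 n : binR n 0 = 1.
Proof. by rewrite /binR bin0. Qed.

Lemma binR_sym n j : (j <= n)%coq_nat -> binR n (n - j)%coq_nat = binR n j.
Proof. by move=> /leP h; rewrite /binR bin_sub. Qed.

Lemma binR_fact n j : (j <= n)%coq_nat ->
  binR n j * (INR (Factorial.fact j) * INR (Factorial.fact (n - j)%coq_nat)) =
  INR (Factorial.fact n).
Proof.
have factE m : factorial m = Factorial.fact m by elim: m => [|m IH] //; rewrite factS IH.
by move=> /leP h; rewrite /binR -!mult_INR -!factE; congr INR; exact: bin_fact.
Qed.

Lemma binR_succ_bottom n j : (j <= n)%coq_nat ->
  INR (S j) * binR n (S j) = (INR n - INR j) * binR n j.
Proof.
move=> h; rewrite /binR -minus_INR // -!mult_INR; congr INR.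
exact: mul_bin_left.
Qed.

Lemma binR_pred_top n j : (j <= n)%coq_nat ->
  INR n * binR (Nat.pred n) j = (INR n - INR j) * binR n j.
Proof.
move=> h; rewrite /binR -minus_INR // -!mult_INR; congr INR.
exact: mul_bin_down.
Qed.

Lemma sum_f_R0_big (F : nat -> nat) n :
  INR (\sum_(i < n.+1) F i) = sum_f_R0 (fun i => INR (F i)) n.
Proof.
elim: n => [|n IH]; first by rewrite big_ord_recr big_ord0.
by rewrite big_ord_recr /= plus_INR -IH.
Qed.

Lemma binR_vandermonde a m :
  sum_f_R0 (fun i => binR m i * binR a i) m = binR (a + m)%coq_nat m.
Proof.
rewrite /binR -[(a + m)%coq_nat]/(a + m)%N -(Vandermonde a m m).
rewrite (sum_f_R0_big (fun i => 'C(a, i) * 'C(m, m - i))%N).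
apply: PartSum.sum_eq => i /leP hi.
by rewrite mult_INR Rmult_comm bin_sub.
Qed.
End BinomialFacts.
Import BinomialFacts.

(* Outside [0, n] the Stdlib coefficient [Binomial.C] is not zero; inside it agrees
   with [binR]. *)
Lemma C_binR n j : (j <= n)%nat -> Binomial.C n j = binR n j.
Proof.
intros h. unfold Binomial.C. rewrite <- (binR_fact n j h).
field. split; apply INR_fact_neq_0.
Qed.

Lemma binR_ge0 n j : 0 <= binR n j.
Proof. apply pos_INR. Qed.

(* Trinomial revision: choosing [i] then [n] among [k] is choosing [n] then [i]. *)
Lemma binR_swap k i n : binR k i * binR (k - i) n = binR k n * binR (k - n) i.
Proof.
destruct (Compare_dec.le_lt_dec (i + n) k) as [h|h].
- assert (hf : forall a b, (a + b <= k)%nat ->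
      binR k a * binR (k - a) b * (INR (Factorial.fact a) * INR (Factorial.fact b) *
        INR (Factorial.fact (k - a - b))) = INR (Factorial.fact k)).
  { intros a b hab. rewrite <- (binR_fact k a) by lia. rewrite <- (binR_fact (k - a) b) by lia.
    ring. }
  apply Rmult_eq_reg_r with
    (INR (Factorial.fact i) * INR (Factorial.fact n) * INR (Factorial.fact (k - i - n))).
  + rewrite hf by lia. replace (k - i - n)%nat with (k - n - i)%nat by lia.
    rewrite <- (hf n i) by lia. ring.
  + repeat apply Rmult_integral_contrapositive_currified; apply INR_fact_neq_0.
- destruct (Compare_dec.le_lt_dec i k);
    [rewrite (binR_small (k - i) n) by lia | rewrite (binR_small k i) by lia];
    destruct (Compare_dec.le_lt_dec n k);
    try rewrite (binR_small (k - n) i) by lia; try rewrite (binR_small k n) by lia; ring.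
Qed.

Lemma sum_truncate (u : nat -> R) a N :
  (a <= N)%nat -> (forall j, (a < j)%nat -> u j = 0) -> sum_f_R0 u N = sum_f_R0 u a.
Proof.
intros h hz. induction h as [|N h IH]; [reflexivity|].
simpl. rewrite IH, (hz (S N)) by lia. ring.
Qed.

Lemma sum_swap (F : nat -> nat -> R) M N :
  sum_f_R0 (fun i => sum_f_R0 (fun n => F i n) N) M =
  sum_f_R0 (fun n => sum_f_R0 (fun i => F i n) M) N.
Proof.
induction M as [|M IH]; [reflexivity|].
simpl. rewrite IH, <- sum_plus. reflexivity.
Qed.

Lemma binomial_expansion a N t :
  (a <= N)%nat -> (1 + t) ^ a = sum_f_R0 (fun j => binR a j * t ^ j) N.
Proof.
intros h. rewrite (sum_truncate _ a N h).
2:{ intros j hj. rewrite binR_small by exact hj. ring. }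
rewrite Rplus_comm, binomial. apply PartSum.sum_eq. intros i hi.
rewrite C_binR, pow1 by exact hi. ring.
Qed.

Lemma sum_ge_first (u : nat -> R) N : (forall j, 0 <= u j) -> u 0%nat <= sum_f_R0 u N.
Proof.
intros h. induction N as [|N IH]; simpl; [lra|]. specialize (h (S N)). lra.
Qed.

Lemma mul_var_sum (a : nat -> R) N t :
  t * sum_f_R0 (fun n => a (S n) * t ^ n) N =
  sum_f_R0 (fun n => a n * t ^ n) (S N) - a 0%nat.
Proof.
rewrite (decomp_sum (fun n => a n * t ^ n) (S N)) by lia. simpl pred.
rewrite scal_sum. replace (a 0%nat * t ^ 0) with (a 0%nat) by ring.
unfold Rminus. rewrite Rplus_comm, <- Rplus_assoc, Rplus_opp_l, Rplus_0_l.
apply PartSum.sum_eq. intros i _. simpl. ring.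
Qed.

Lemma is_derive_poly (a : nat -> R) N t :
  a (S N) = 0 ->
  is_derive (fun y => sum_f_R0 (fun n => a n * y ^ n) N) t
    (sum_f_R0 (fun n => INR (S n) * a (S n) * t ^ n) N).
Proof.
intros ha. apply is_derive_Reals.
pose proof (derivable_pt_lim_finite_sum a t N) as hd.
destruct N as [|N]; simpl in hd |- *; rewrite ha.
- replace (1 * 0 * 1) with 0 by ring. exact hd.
- rewrite Rmult_0_r, Rmult_0_l, Rplus_0_r. exact hd.
Qed.

(* Taylor coefficients of [f] at 1: [f (1 + t) = sum_n tcoef d k n * t ^ n]. *)
Definition tcoef (d k n : nat) : R := binR k n * binR (d - n) (d - k) / binR d k.

Definition fshift (d k : nat) (t : R) : R := sum_f_R0 (fun n => tcoef d k n * t ^ n) k.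
Definition fshift' (d k : nat) (t : R) : R :=
  sum_f_R0 (fun n => INR (S n) * tcoef d k (S n) * t ^ n) k.

Lemma tcoef_beyond d k n : (k < n)%nat -> tcoef d k n = 0.
Proof. intros hn. unfold tcoef. rewrite (binR_small k n hn). unfold Rdiv. ring. Qed.

Lemma is_derive_fshift d k t : is_derive (fshift d k) t (fshift' d k t).
Proof. apply is_derive_poly, tcoef_beyond. lia. Qed.

Section TaylorCoefficients.
Variables d k : nat.
Hypothesis hkd : (k <= d)%nat.

(* The coefficient identity behind the expansion at 1 (Vandermonde after revision). *)
Lemma taylor_coef_sum n : (n <= k)%nat ->
  sum_f_R0 (fun i => binR k i * binR (d - k) i * binR (k - i) n) (d - k) =
  binR k n * binR (d - n) (d - k).
Proof.
intros hn.
rewrite (PartSum.sum_eq _ (fun i => binR (d - k) i * binR (k - n) i * binR k n)).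
2:{ intros i _. transitivity (binR (d - k) i * (binR k i * binR (k - i) n)); [ring|].
    rewrite binR_swap. ring. }
rewrite <- scal_sum, binR_vandermonde. replace (k - n + (d - k))%nat with (d - n)%nat by lia.
ring.
Qed.

Lemma fpoly_fshift t : (d - k <= k)%nat -> fpoly d k (1 + t) = fshift d k t.
Proof.
intros hm. unfold fpoly, fshift, tcoef.
rewrite (PartSum.sum_eq _
  (fun i => sum_f_R0 (fun n => binR k i * binR (d - k) i * binR (k - i) n * t ^ n) k)).
2:{ intros i hi. rewrite !C_binR, (binomial_expansion (k - i) k t), scal_sum by lia.
    apply PartSum.sum_eq. intros j _. ring. }
rewrite sum_swap, C_binR, scal_sum by lia. apply PartSum.sum_eq. intros n hn.
rewrite <- (taylor_coef_sum n hn), <- scal_sum. unfold Rdiv. ring.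
Qed.

Lemma tcoef_recurrence n : (n <= k)%nat ->
  INR (S n) * tcoef d k (S n) * (INR d - INR n) = tcoef d k n * (INR k - INR n) ^ 2.
Proof.
intros hn. unfold tcoef.
pose proof (binR_succ_bottom k n hn) as h1.
pose proof (binR_pred_top (d - n) (d - k) ltac:(lia)) as h2.
replace (Nat.pred (d - n)) with (d - S n)%nat in h2 by lia.
rewrite !minus_INR in h2 by lia.
replace (INR d - INR n - (INR d - INR k)) with (INR k - INR n) in h2 by ring.
unfold Rdiv.
replace (INR (S n) * (binR k (S n) * binR (d - S n) (d - k) * / binR d k) * (INR d - INR n))
  with ((INR (S n) * binR k (S n)) * ((INR d - INR n) * binR (d - S n) (d - k)) * / binR d k)
  by ring.
rewrite h1, h2. ring.
Qed.

Lemma tcoef_0 : tcoef d k 0 = 1.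
Proof.
unfold tcoef. rewrite binR_n0, Nat.sub_0_r, binR_sym by exact hkd.
field. apply Rgt_not_eq, binR_pos, hkd.
Qed.

Lemma tcoef_ge0 n : 0 <= tcoef d k n.
Proof.
unfold tcoef. apply Rmult_le_pos; [apply Rmult_le_pos; apply binR_ge0|].
left. apply Rinv_0_lt_compat, binR_pos, hkd.
Qed.

Lemma fshift_ge1 t : 0 <= t -> 1 <= fshift d k t.
Proof.
intros ht. rewrite <- tcoef_0 at 1. replace (tcoef d k 0) with (tcoef d k 0 * t ^ 0) by ring.
apply (sum_ge_first (fun n => tcoef d k n * t ^ n)). intros j.
apply Rmult_le_pos; [apply tcoef_ge0 | apply pow_le]; assumption.
Qed.

End TaylorCoefficients.

Lemma le_div_sqrt (S M A L : R) :
  0 < S -> 0 < M -> 0 <= A -> L ^ 2 * A <= S * (S - 2 * L * M) ->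
  L <= S / (M + sqrt (M ^ 2 + A)).
Proof.
intros hS hM hA hL.
assert (hX : 0 <= M ^ 2 + A) by nra.
set (Q := sqrt (M ^ 2 + A)).
assert (hQ : 0 <= Q) by apply sqrt_pos.
assert (hQ2 : Q * Q = M ^ 2 + A) by (apply sqrt_sqrt; exact hX).
apply Rmult_le_reg_r with (M + Q); [lra|].
unfold Rdiv. rewrite Rmult_assoc, Rinv_l, Rmult_1_r by lra.
destruct (Rle_dec L 0) as [hL0|hL0]; [nra|].
assert (hLM : 0 <= S - 2 * L * M) by nra.
(* [L Q <= S - L M] follows by comparing squares of nonnegative numbers. *)
assert (hsq : (L * Q) ^ 2 <= (S - L * M) ^ 2) by nra.
assert (L * Q <= S - L * M) by (apply Rsqr_incr_0_var; unfold Rsqr; nra).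
nra.
Qed.

Lemma eta_lower_bound (K D f : R) :
  K < D -> 1 <= 2 * K - D -> 1 <= f -> f * (2 * K - D) ^ 2 <= K ->
  (2 * (2 * K - D) - 1) / (2 * D) + 1 / (2 * D * f) <=
  (2 * K - D) / ((D - K) + sqrt ((D - K) ^ 2 + D * (2 * K - D) * f)).
Proof.
intros hKD hS hf hfK.
set (S := 2 * K - D) in *. set (M := D - K).
set (L := (2 * S - 1) / (2 * D) + 1 / (2 * D * f)).
assert (hD : 0 < D) by (unfold S in hS; lra).
assert (hM : 0 < M) by (unfold M; lra).
apply le_div_sqrt; [lra | exact hM | apply Rmult_le_pos; nra |].
assert (hgap : 0 <= 1 + 4 * M - (2 * S - 1) ^ 2 * f).
{ assert (hKM : K = M + S) by (unfold M, S; ring). nra. }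
assert (E : S * (S - 2 * L * M) - L ^ 2 * (D * S * f) =
            S * (f - 1) * (1 + 4 * M - (2 * S - 1) ^ 2 * f) / (4 * D * f)).
{ unfold L. replace D with (S + 2 * M) by (unfold S, M; ring). field. split; lra. }
assert (0 <= S * (f - 1) * (1 + 4 * M - (2 * S - 1) ^ 2 * f) / (4 * D * f)).
{ apply Rmult_le_pos; [apply Rmult_le_pos; [apply Rmult_le_pos|]; lra|].
  left. apply Rinv_0_lt_compat. nra. }
lra.
Qed.

Definition kc (K D : R) : R := K + K * (2 * (2 * K - D) - 1) / (2 * D).

(* The quadratic [q(n) = (kc - n)(d - n) - 2(k - n)^2] governing the sign of the
   coefficients is concave, and positive at [n = 1] and [n = k], hence on [1, k]. *)
Lemma defect_quadratic_pos (K D n : R) :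
  K < D -> 1 <= 2 * K - D -> 1 <= n <= K ->
  0 < (kc K D - n) * (D - n) - 2 * (K - n) ^ 2.
Proof.
intros hKD hS hn. unfold kc.
assert (hD : 0 < D) by lra.
set (c := K * (2 * (2 * K - D) - 1) / (2 * D)).
assert (hc : c * (2 * D) = K * (2 * (2 * K - D) - 1)) by (unfold c; field; lra).
assert (hc0 : 0 < c) by (apply Rmult_lt_reg_r with (2 * D); nra).
assert (q1 : 0 < (K + c - 1) * (D - 1) - 2 * (K - 1) ^ 2) by nra.
assert (qK : 0 < (K + c - K) * (D - K)) by nra.
assert (E : ((K + c - n) * (D - n) - 2 * (K - n) ^ 2) * (K - 1) =
            ((K + c - 1) * (D - 1) - 2 * (K - 1) ^ 2) * (K - n)
            + ((K + c - K) * (D - K)) * (n - 1) + (n - 1) * (K - n) * (K - 1)) by ring.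
assert (0 <= (n - 1) * (K - n) * (K - 1)) by (apply Rmult_le_pos; [apply Rmult_le_pos|]; lra).
nra.
Qed.

(* Coefficients of the polynomial [kc f(1+t) + k/(2d) - (2+t) f'(1+t)] in [t]. *)
Definition dcoef (d k n : nat) : R :=
  kc (INR k) (INR d) * tcoef d k n - 2 * (INR (S n) * tcoef d k (S n)) - INR n * tcoef d k n.

Section DefectPolynomial.
Variables d k : nat.
Hypothesis hKD : INR k < INR d.
Hypothesis hS : 1 <= 2 * INR k - INR d.

Local Notation K := (INR k).
Local Notation D := (INR d).

Lemma k_le_d : (k <= d)%nat.
Proof. apply INR_le. lra. Qed.

Lemma defect_expansion t :
  kc K D * fshift d k t + K / (2 * D) - (2 + t) * fshift' d k t =
  sum_f_R0 (fun n => dcoef d k n * t ^ n) k + K / (2 * D).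
Proof.
assert (hshift : t * fshift' d k t = sum_f_R0 (fun n => INR n * tcoef d k n * t ^ n) k).
{ unfold fshift'. rewrite (mul_var_sum (fun n => INR n * tcoef d k n)). simpl sum_f_R0 at 1.
  rewrite tcoef_beyond by lia. simpl INR. ring. }
replace ((2 + t) * fshift' d k t) with (2 * fshift' d k t + t * fshift' d k t) by ring.
rewrite hshift. unfold fshift, fshift'. rewrite !scal_sum.
rewrite (PartSum.sum_eq (fun n => dcoef d k n * t ^ n) (fun n => tcoef d k n * t ^ n * kc K D
          - INR (S n) * tcoef d k (S n) * t ^ n * 2 - INR n * tcoef d k n * t ^ n)).
- rewrite !minus_sum. ring.
- intros n _. unfold dcoef. ring.
Qed.

Lemma tcoef_1 : tcoef d k 1 = K ^ 2 / D.
Proof.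
pose proof k_le_d as hkd.
pose proof (tcoef_recurrence d k hkd 0 ltac:(lia)) as r.
rewrite tcoef_0 in r by exact hkd. simpl INR in r.
field_simplify_eq; [|lra]. nra.
Qed.

(* The constant term cancels the added [k/(2d)]: this fixes the choice of [kc]. *)
Lemma dcoef_0 : dcoef d k 0 + K / (2 * D) = 0.
Proof.
pose proof k_le_d as hkd.
unfold dcoef. rewrite tcoef_0, tcoef_1 by exact hkd. simpl INR. unfold kc.
field. lra.
Qed.

Lemma dcoef_factor n : (n <= k)%nat ->
  dcoef d k n * (D - INR n) =
  tcoef d k n * ((kc K D - INR n) * (D - INR n) - 2 * (K - INR n) ^ 2).
Proof.
intros hnk. pose proof k_le_d as hkd.
pose proof (tcoef_recurrence d k hkd n hnk) as r. unfold dcoef.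
transitivity (kc K D * tcoef d k n * (D - INR n)
  - 2 * (INR (S n) * tcoef d k (S n) * (D - INR n)) - INR n * tcoef d k n * (D - INR n));
  [ring|].
rewrite r. ring.
Qed.

Lemma dcoef_nonneg n : (1 <= n)%nat -> 0 <= dcoef d k n.
Proof.
intros hn. pose proof k_le_d as hkd.
destruct (Compare_dec.le_lt_dec n k) as [hnk|hnk].
- assert (hnK : 1 <= INR n <= K) by (split; [apply (le_INR 1) | apply le_INR]; lia).
  pose proof (defect_quadratic_pos K D (INR n) hKD hS hnK) as hq.
  pose proof (tcoef_ge0 d k hkd n).
  assert (0 <= dcoef d k n * (D - INR n))
    by (rewrite dcoef_factor by exact hnk; apply Rmult_le_pos; lra).
  nra.
- unfold dcoef. rewrite !tcoef_beyond by lia. lra.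
Qed.

Lemma dcoef_1_pos : 0 < dcoef d k 1.
Proof.
assert (hk1 : (1 <= k)%nat) by (apply (INR_le 1); simpl; lra).
assert (hnK : 1 <= INR 1 <= K) by (simpl; lra).
pose proof (defect_quadratic_pos K D (INR 1) hKD hS hnK) as hq.
pose proof (dcoef_factor 1 hk1) as E.
assert (0 < tcoef d k 1) by (rewrite tcoef_1; apply Rdiv_lt_0_compat; nra).
simpl INR in *. assert (0 < dcoef d k 1 * (D - 1)) by (rewrite E; apply Rmult_lt_0_compat; lra).
nra.
Qed.

Lemma defect_pos t : 0 < t ->
  (2 + t) * fshift' d k t < kc K D * fshift d k t + K / (2 * D).
Proof.
intros ht.
assert (hk1 : (1 <= k)%nat) by (apply (INR_le 1); simpl; lra).
enough (0 < sum_f_R0 (fun n => dcoef d k n * t ^ n) k + K / (2 * D))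
  by (rewrite <- defect_expansion in *; lra).
rewrite decomp_sum by lia.
assert (hrest : dcoef d k 1 * t ^ 1 <= sum_f_R0 (fun i => dcoef d k (S i) * t ^ S i) (pred k)).
{ apply (sum_ge_first (fun i => dcoef d k (S i) * t ^ S i)). intros i.
  apply Rmult_le_pos; [apply dcoef_nonneg; lia | apply pow_le; lra]. }
pose proof dcoef_0. pose proof dcoef_1_pos. simpl pow in *.
assert (0 < dcoef d k 1 * (t * 1)) by (apply Rmult_lt_0_compat; lra).
lra.
Qed.

End DefectPolynomial.

Lemma is_derive_translate (g : R -> R) (a x l : R) :
  is_derive g (x - a) l -> is_derive (fun y => g (y - a)) x l.
Proof.
intros hg. rewrite <- (scal_one l).
apply (is_derive_comp g (fun y => y - a)); [exact hg|].
auto_derive; [exact I | reflexivity].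
Qed.

(* Final bookkeeping: with [L <= eta] the reduced inequality implies the claim, since
   [kc f + k/(2d) = k f (1 + L)] for [L = (2(2k-d)-1)/(2d) + 1/(2df)]. *)
Lemma reduction (K D f g e : R) :
  0 < K -> 0 < D -> 1 <= f ->
  (2 * (2 * K - D) - 1) / (2 * D) + 1 / (2 * D * f) <= e ->
  g < kc K D * f + K / (2 * D) -> g / K < (1 + e) * f.
Proof.
intros hK hD hf hL hg.
set (L := (2 * (2 * K - D) - 1) / (2 * D) + 1 / (2 * D * f)) in *.
assert (E : kc K D * f + K / (2 * D) = K * ((1 + L) * f)) by (unfold kc, L; field; lra).
apply Rmult_lt_reg_l with K; [exact hK|].
replace (K * (g / K)) with g by (field; lra).
assert (K * ((1 + L) * f) <= K * ((1 + e) * f)) by (apply Rmult_le_compat_l; nra).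
lra.
Qed.

Theorem lemma18 (d k : nat) :
  (404 <= d)%nat ->
  INR d / 2 + 1 < INR k -> INR k <= 2 * INR d / 3 ->
  forall x : R, 1 < x <= 2 ->
  fpoly d k x <= INR k / (2 * INR k - INR d) ^ 2 ->
  (x + 1) * Derive (fpoly d k) x / INR k < (1 + eta d k x) * fpoly d k x.
Proof.
intros _ h1 h2 x hx hf.
assert (hD : 0 < INR d) by (pose proof (pos_INR k); lra).
assert (hKD : INR k < INR d) by lra.
assert (hS : 1 <= 2 * INR k - INR d) by lra.
pose proof (k_le_d d k hKD) as hkd.
assert (hmk : (d - k <= k)%nat) by (apply INR_le; rewrite minus_INR by exact hkd; lra).
assert (hfx : forall y, fpoly d k y = fshift d k (y - 1)).
{ intros y. rewrite <- fpoly_fshift by assumption. f_equal. ring. }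
assert (hder : Derive (fpoly d k) x = fshift' d k (x - 1)).
{ apply is_derive_unique, (is_derive_ext (fun y => fshift d k (y - 1))).
  - intros y. symmetry. apply hfx.
  - apply is_derive_translate, is_derive_fshift. }
unfold eta. rewrite hder, hfx. rewrite hfx in hf.
set (t := x - 1) in *. replace (x + 1) with (2 + t) by (unfold t; ring).
assert (ht : 0 < t) by (unfold t; lra).
pose proof (fshift_ge1 d k hkd t (Rlt_le _ _ ht)) as hf1.
assert (hfK : fshift d k t * (2 * INR k - INR d) ^ 2 <= INR k).
{ assert (hS2 : 0 < (2 * INR k - INR d) ^ 2) by nra.
  apply (Rmult_le_compat_r ((2 * INR k - INR d) ^ 2)) in hf; [|lra].
  unfold Rdiv in hf. rewrite Rmult_assoc, Rinv_l, Rmult_1_r in hf by lra. exact hf. }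
apply (reduction (INR k) (INR d)); [lra | exact hD | exact hf1 | |].
- exact (eta_lower_bound (INR k) (INR d) _ hKD hS hf1 hfK).
- exact (defect_pos d k hKD hS t ht).
Qed.
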